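(* Let $A$ be a nonempty finite set of $n$ alternatives. A choice rule $C$ on $A$ is responsive if and only if it satisfies capacity-filling and the capacity-wise weaker axiom of revealed preference (CWrARP).
   Context: Let $\mathcal{A}$ be the set of nonempty subsets of $A$. A choice rule assigns to each $(S,q)\in\mathcal{A}\times\{1,\dots,n\}$ a nonempty set $C(S,q)\subseteq S$ with $|C(S,q)|\le q$. A priority ordering is a complete, transitive, antisymmetric binary relation on $A$. $C$ is responsive for a priority ordering $\succ$ if for each $(S,q)$, $C(S,q)$ is obtained by choosing the highest $\succ$-priority alternatives in $S$ until $q$ alternatives are chosen or no alternative is left; $C$ is responsive if it is responsive for some priority ordering. Capacity-filling: $|C(S,q)|=\min\{|S|,q\}$ for all $(S,q)$. CWrARP: for each $S,S'\in\mathcal{A}$, $q,q'\in\{1,\dots,n\}$ and each $a,b\in S\cap S'$, if $a\in C(S,q)$ and $b\in C(S',q')\setminus C(S,q)$, then $a\in C(S',q')$. *)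

From mathcomp Require Import all_boot.
Set Implicit Arguments. Unset Strict Implicit. Unset Printing Implicit Defensive.

(* A choice rule is represented as a total
   function C : {set A} -> nat -> {set A}; only its values on the domain
   (S nonempty, 1 <= q <= #|A|) matter. *)

Definition in_dom (A : finType) (S : {set A}) (q : nat) : bool :=
  (S != set0) && (0 < q <= #|A|).

Definition is_choice_rule (A : finType) (C : {set A} -> nat -> {set A}) : Prop :=
  forall S q, in_dom S q ->
    [/\ C S q != set0, C S q \subset S & #|C S q| <= q].

(* A priority ordering: complete, transitive, antisymmetric relation.
   [p a b] means "a has (weakly) higher priority than b". *)
Definition priority_ordering (A : finType) (p : rel A) : Prop :=
  total p /\ transitive p /\ antisymmetric p.

(* Choosing the highest-priority alternatives of S one by one until q are
   chosen or none is left: list S in decreasing priority and take the first q. *)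
Definition top_choice (A : finType) (p : rel A) (S : {set A}) (q : nat)
  : {set A} := [set x in take q (sort p (enum S))].

Definition responsive_for (A : finType) (C : {set A} -> nat -> {set A})
  (p : rel A) : Prop :=
  forall S q, in_dom S q -> C S q = top_choice p S q.

Definition responsive (A : finType) (C : {set A} -> nat -> {set A}) : Prop :=
  exists p : rel A, priority_ordering p /\ responsive_for C p.

Definition capacity_filling (A : finType) (C : {set A} -> nat -> {set A})
  : Prop :=
  forall S q, in_dom S q -> #|C S q| = minn #|S| q.

Definition CWrARP (A : finType) (C : {set A} -> nat -> {set A}) : Prop :=
  forall S S' q q', in_dom S q -> in_dom S' q' ->
  forall a b, a \in S :&: S' -> b \in S :&: S' ->
    a \in C S q -> b \in C S' q' :\: C S q -> a \in C S' q'.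

From mathcomp Require Import all_boot.
Set Implicit Arguments. Unset Strict Implicit. Unset Printing Implicit Defensive.

(* A responsive rule fills capacity, and its chosen sets are upward closed for
   the priority, which gives CWrARP by totality.  Conversely, let [a] have
   priority over [b] when [a] is chosen from [{a, b}] at capacity 1.  CWrARP
   at capacity 1 makes the capacity-1 choices consistent across menus, so this
   is a priority ordering, and CWrARP against the menus [{b, a}] makes every
   [C S q] upward closed for it.  An upward closed subset of [S] that misses a
   member [x] of the top-[q] set consists of members of [S] strictly above
   [x], hence is smaller than [minn #|S| q]; capacity-filling thus forces
   [C S q] to be the top-[q] set. *)

Section TopChoice.

Variables (A : finType) (p : rel A).
Hypothesis p_priority : priority_ordering p.

Let p_total : total p := p_priority.1.

Let mem_sort_enum (S : {set A}) x : (x \in sort p (enum S)) = (x \in S).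
Proof. by rewrite mem_sort mem_enum. Qed.

Lemma index_sorted_lt (s : seq A) x y : sorted p s -> x \in s -> y \in s ->
  p y x -> y != x -> index y s < index x s.
Proof.
have [_ [p_trans p_anti]] := p_priority.
move=> s_sorted xs ys pyx; apply: contraNT; rewrite -leqNgt => le_xy.
have p_refl : reflexive p by move=> z; rewrite -[p z z]orbb p_total.
have pxy := sorted_leq_index p_trans p_refl s_sorted x y xs ys le_xy.
by rewrite (p_anti x y) ?pxy ?pyx.
Qed.

Lemma mem_top_choice S q x :
  (x \in top_choice p S q) = (x \in S) && (index x (sort p (enum S)) < q).
Proof.
rewrite inE; have [xS | xNS] := boolP (x \in S).
  by rewrite in_take // mem_sort_enum.
by apply/negbTE; apply: contra xNS => /mem_take; rewrite mem_sort_enum.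
Qed.

Lemma card_top_choice S q : #|top_choice p S q| = minn #|S| q.
Proof.
rewrite cardsE (card_uniqP _); last by rewrite take_uniq ?sort_uniq ?enum_uniq.
by rewrite size_take_min size_sort -cardE minnC.
Qed.

Lemma top_choice_upward S q x y : x \in top_choice p S q -> y \in S -> p y x ->
  y \in top_choice p S q.
Proof.
rewrite !mem_top_choice => /andP[xS xq] yS pyx; rewrite yS /=.
have [-> // | yNx] := eqVneq y x; apply: ltn_trans xq.
by apply: index_sorted_lt; rewrite ?sort_sorted ?mem_sort_enum.
Qed.

Lemma card_strict_upper_lt S q x : x \in top_choice p S q ->
  #|[set y in S | p y x && (y != x)]| < minn #|S| q.
Proof.
rewrite mem_top_choice leq_min => /andP[xS xq]; apply/andP; split.
  apply: proper_card; apply/properP; split; first by apply/subsetP => y /setIdP[].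
  by exists x => //; rewrite inE eqxx !andbF.
set s := sort p (enum S); apply: leq_ltn_trans xq.
apply: (@leq_trans #|[set y in take (index x s) s]|).
  apply: subset_leq_card; apply/subsetP => y /setIdP[yS /andP[pyx yNx]].
  rewrite inE in_take ?mem_sort_enum //.
  by apply: index_sorted_lt; rewrite ?sort_sorted ?mem_sort_enum.
by rewrite cardsE (leq_trans (card_size _)) // size_take_min geq_minl.
Qed.

Variable C : {set A} -> nat -> {set A}.
Hypothesis C_responsive : responsive_for C p.

Lemma responsive_capacity_filling : capacity_filling C.
Proof. by move=> S q dom; rewrite C_responsive // card_top_choice. Qed.

Lemma responsive_CWrARP : CWrARP C.
Proof.
move=> S S' q q' dom dom' a b /setIP[aS aS'] /setIP[bS bS'].
rewrite !C_responsive // => aC /setDP[bC' bNC].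
have [pab | pba] := orP (p_total a b); first exact: top_choice_upward bC' aS' pab.
by rewrite (top_choice_upward aC bS pba) in bNC.
Qed.

End TopChoice.

Definition revealed_priority (A : finType) (C : {set A} -> nat -> {set A})
  : rel A := fun a b => a \in C [set a; b] 1.

Section RevealedPriority.

Variables (A : finType) (C : {set A} -> nat -> {set A}).
Hypotheses (A_gt0 : 0 < #|A|) (C_choice : is_choice_rule C).
Hypotheses (C_filling : capacity_filling C) (C_CWrARP : CWrARP C).

Local Notation p := (revealed_priority C).

Lemma in_dom1 (S : {set A}) x : x \in S -> in_dom S 1.
Proof. by move=> xS; apply/andP; split; [apply/set0Pn; exists x | rewrite A_gt0]. Qed.

Lemma choice_sub S q x : in_dom S q -> x \in C S q -> x \in S.
Proof. by move=> dom; have [_ sub _] := C_choice dom; apply: (subsetP sub). Qed.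

Lemma choice1_uniq S x y : in_dom S 1 -> x \in C S 1 -> y \in C S 1 -> x = y.
Proof.
move=> dom xC yC; have nS : S != set0 by case/andP: dom.
have /cards1P[z Cz] : #|C S 1| == 1.
  by rewrite C_filling //; apply/eqP/minn_idPr; rewrite card_gt0.
by move: xC yC; rewrite Cz !inE => /eqP-> /eqP->.
Qed.

Lemma choice1_consistent S S' x y : in_dom S 1 -> in_dom S' 1 ->
  x \in C S 1 -> y \in C S' 1 -> x \in S' -> y \in S -> x = y.
Proof.
move=> dom dom' xC yC' xS' yS.
have [yC | yNC] := boolP (y \in C S 1); first exact: choice1_uniq yC.
apply: (choice1_uniq dom' _ yC'); apply: (C_CWrARP dom dom' (a := x) (b := y)) => //.
- by rewrite inE (choice_sub dom xC).
- by rewrite inE yS (choice_sub dom' yC').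
- by rewrite inE yNC.
Qed.

Lemma revealed_of_choice1 T x y : in_dom T 1 -> x \in C T 1 -> y \in T -> p x y.
Proof.
move=> dom xC yT; have dom2 := in_dom1 (setU11 x [set y]).
have [/set0Pn[z zC] _ _] := C_choice dom2.
suff zx : z = x by rewrite zx in zC.
have xT := choice_sub dom xC.
apply: (choice1_consistent dom2 dom zC xC); last by rewrite !inE eqxx.
by have := choice_sub dom2 zC; rewrite !inE => /orP[]/eqP->.
Qed.

Lemma revealed_antisym : antisymmetric p.
Proof.
move=> a b /andP[pab pba]; have dom := in_dom1 (setU11 a [set b]).
by apply: choice1_consistent dom (in_dom1 (setU11 b [set a])) pab pba _ _;
  rewrite !inE eqxx ?orbT.
Qed.

Lemma revealed_total : total p.
Proof.
move=> a b; have dom := in_dom1 (setU11 a [set b]).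
have [/set0Pn[x xC] _ _] := C_choice dom.
have := choice_sub dom xC; rewrite !inE => /orP[]/eqP xE; subst x.
  by rewrite (revealed_of_choice1 dom xC) // !inE eqxx orbT.
by rewrite (revealed_of_choice1 dom xC) ?orbT // !inE eqxx.
Qed.

Lemma revealed_trans : transitive p.
Proof.
move=> b a c pab pbc; have dom := in_dom1 (setU11 a [set b; c]).
have [/set0Pn[x xC] _ _] := C_choice dom.
have := choice_sub dom xC; rewrite !inE => /or3P[]/eqP xE; subst x.
- by apply: (revealed_of_choice1 dom xC); rewrite !inE eqxx !orbT.
- have pba : p b a by apply: (revealed_of_choice1 dom xC); rewrite !inE eqxx.
  by rewrite (revealed_antisym (introT andP (conj pab pba))).
- have pcb : p c b by apply: (revealed_of_choice1 dom xC); rewrite !inE eqxx orbT.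
  by rewrite -(revealed_antisym (introT andP (conj pbc pcb))).
Qed.

Lemma revealed_priority_ordering : priority_ordering p.
Proof.
split; first exact: revealed_total.
by split; [exact: revealed_trans | exact: revealed_antisym].
Qed.

Lemma choice_upward S q a b : in_dom S q -> a \in C S q -> b \in S -> p b a ->
  b \in C S q.
Proof.
move=> dom aC bS pba; apply: contraT => bNC.
have dom2 := in_dom1 (setU11 b [set a]).
have aC2 : a \in C [set b; a] 1.
  apply: (C_CWrARP dom dom2 (a := a) (b := b)) => //.
  - by rewrite !inE (choice_sub dom aC) eqxx orbT.
  - by rewrite !inE bS eqxx.
  - by rewrite inE bNC.
by rewrite (choice1_uniq dom2 pba aC2) aC in bNC.
Qed.

Lemma choice_top_choice : responsive_for C p.
Proof.
move=> S q dom; apply/eqP.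
rewrite eq_sym eqEcard C_filling // card_top_choice leqnn andbT.
apply/subsetP => x xt; apply: contraT => xNC.
suff /subset_leq_card : C S q \subset [set y in S | p y x && (y != x)].
  have := card_strict_upper_lt revealed_priority_ordering xt.
  by rewrite -C_filling // ltnNge => /negP.
apply/subsetP => y yC; rewrite inE (choice_sub dom yC) /=.
have [yx|yNx] := eqVneq y x; first by rewrite -yx yC in xNC.
rewrite andbT; have [//|pxy] := orP (revealed_total y x).
have xS : x \in S by move: xt; rewrite mem_top_choice => /andP[].
by rewrite (choice_upward dom yC xS pxy) in xNC.
Qed.

End RevealedPriority.

Theorem theorem2 (A : finType) (hA : 0 < #|A|)
  (C : {set A} -> nat -> {set A}) (hC : is_choice_rule C) :
  responsive C <-> capacity_filling C /\ CWrARP C.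
Proof.
split=> [[p [p_priority C_resp]] | [C_filling C_CWrARP]].
  split; first exact: responsive_capacity_filling C_resp.
  exact: (responsive_CWrARP p_priority C_resp).
exists (revealed_priority C); split; first exact: revealed_priority_ordering.
exact: choice_top_choice.
Qed.
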